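(* Let $A$ be a sub-tree of $T$, let $I',I''\subseteq\mathcal{I}_A$ be disjoint, and let $\Psi\subseteq V_A^{I'}$ and $\Phi\subseteq V_A^{I''}$. Then for every $x\in[0,d(r_A)]$, $$G(\Psi\cup\Phi,x)=G(\Psi,x)+G\big(\Phi,\;x+(d(r_A)-x)P(\Psi)\big),$$ where $P(\Psi)=0$ if $\Psi=\emptyset$ (note $x+(d(r_A)-x)P(\Psi)\le d(r_A)$).
   Context: Setting. $T$ is a finite tree rooted at $r_T$, node set $V_T$; every edge $e$ has weight $w_e\ge 0$. Every node $v$ has a probability $\pi_v\in(0,1]$ and a prize $p_v\in\mathbb{R}$. $d(v)$ is the total weight of the path from $r_T$ to $v$. A random set $\omega\subseteq V_T$ contains each node $v$ independently with probability $\pi_v$. For $S\subseteq V_T$, $P(S)=1-\prod_{s\in S}(1-\pi_s)$ ($P(\emptyset)=0$). For a node $a$, the sub-tree $A$ rooted at $r_A=a$ consists of $a$ and all its descendants, with node set $V_A$; if $a$ has children $c_1,\dots,c_m$, then $A_i$ ($1\le i\le m$) is the sub-tree rooted at $c_i$, $A_0$ is the sub-tree consisting of the single node $r_A$, $\mathcal{I}_A=\{0,1,\dots,m\}$, and $V_A^I=\bigcup_{i\in I}V_{A_i}$ for $I\subseteq\mathcal{I}_A$. For $Q\subseteq V_T$, $W(Q)$ is the total weight of the edges lying on at least one path from $r_T$ to a node of $Q$. For $S\subseteq V_A$ and $x\le d(r_A)$ the expected profit is $G(S,x)=\sum_{s\in S}p_s\pi_s-\mathbb{E}[W(S\cap\omega)]+x\,P(S)$.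 *)

From HB Require Import structures.
From mathcomp Require Import all_boot all_order all_algebra.
Set Implicit Arguments. Unset Strict Implicit. Unset Printing Implicit Defensive.
Import Order.TTheory GRing.Theory Num.Theory.
Local Open Scope ring_scope.

(* The edge from v <> r to its parent is identified with v; its weight is w v. *)
Definition is_rooted_tree (V : finType) (r : V) (par : V -> V) : Prop :=
  par r = r /\ forall v, connect (frel par) v r.

Definition anc (V : finType) (par : V -> V) (a u : V) : bool :=
  connect (frel par) u a.

Section Defs.
Variables (R : realFieldType) (V : finType) (r : V) (par : V -> V).
Variables (w pi p : V -> R).

Definition dist (v : V) : R := \sum_(u | anc par u v && (u != r)) w u.

Definition Pr (S : {set V}) : R := 1 - \prod_(s in S) (1 - pi s).

Definition Wt (Q : {set V}) : R :=
  \sum_(v | (v != r) && [exists q in Q, anc par v q]) w v.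

Definition prob_omega (om : {set V}) : R :=
  \prod_(v in om) pi v * \prod_(v in ~: om) (1 - pi v).

Definition EW (S : {set V}) : R :=
  \sum_(om : {set V}) prob_omega om * Wt (S :&: om).

Definition G (S : {set V}) (x : R) : R :=
  \sum_(s in S) p s * pi s - EW S + x * Pr S.

(* Index set I_A of the sub-tree rooted at a: index 0 is encoded by a itself,
   index i >= 1 by the child c_i of a. *)
Definition idx (a : V) : {set V} :=
  [set i | (i == a) || ((par i == a) && (i != a))].

Definition Vsub (a i : V) : {set V} :=
  if i == a then [set a] else [set u | anc par i u].

Definition VAI (a : V) (I : {set V}) : {set V} := \bigcup_(i in I) Vsub a i.

End Defs.

From HB Require Import structures.
From mathcomp Require Import all_boot all_order all_algebra.
From mathcomp Require Import ring.
Import Order.TTheory GRing.Theory Num.Theory.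
Local Open Scope ring_scope.
Set Implicit Arguments. Unset Strict Implicit. Unset Printing Implicit Defensive.

(* Two nodes taken from sub-trees of A hanging at different indices have
   exactly the ancestors of r_A as common ancestors.  Hence, whenever both
   Psi and Phi are hit, W((Psi u Phi) n omega) = W(Psi n omega) + W(Phi n omega) - d(r_A),
   and since Psi and Phi are disjoint, they are hit independently, with
   probability P(Psi) P(Phi). *)

Lemma big_setU_disjoint (R : Type) (idx : R) (op : Monoid.com_law idx)
    (I : finType) (A B : {set I}) (F : I -> R) :
  [disjoint A & B] ->
  \big[op/idx]_(i in A :|: B) F i = op (\big[op/idx]_(i in A) F i) (\big[op/idx]_(i in B) F i).
Proof. by move=> dAB; rewrite -bigU //; apply: eq_bigl => i; rewrite !inE. Qed.

(* Specialised so that [ring] sees [+] and [*] rather than a monoid law. *)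
Lemma sumr_setU (R : nmodType) (I : finType) (A B : {set I}) (F : I -> R) :
  [disjoint A & B] -> \sum_(i in A :|: B) F i = \sum_(i in A) F i + \sum_(i in B) F i.
Proof. exact: big_setU_disjoint. Qed.

Lemma prodr_setU (R : comPzSemiRingType) (I : finType) (A B : {set I}) (F : I -> R) :
  [disjoint A & B] -> \prod_(i in A :|: B) F i = \prod_(i in A) F i * \prod_(i in B) F i.
Proof. exact: big_setU_disjoint. Qed.

Section Ancestors.
Variables (V : finType) (r : V) (par : V -> V).

Lemma ancP u v : reflect (exists n, iter n par v = u) (anc par u v).
Proof.
apply: (iffP idP) => [uv | [n <-]]; last exact: fconnect_iter.
by exists (findex par v u); exact: iter_findex.
Qed.

Lemma anc_refl u : anc par u u.
Proof. exact: connect0. Qed.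

Lemma anc_trans x y z : anc par x y -> anc par y z -> anc par x z.
Proof. by move=> xy yz; exact: connect_trans yz xy. Qed.

Lemma anc_par u : anc par (par u) u.
Proof. exact: fconnect1. Qed.

Lemma anc_total x y q : anc par x q -> anc par y q -> anc par x y || anc par y x.
Proof.
move=> /ancP [n <-] /ancP [m <-]; case: (leqP n m) => [le_nm | /ltnW le_mn].
  by apply/orP; right; apply/ancP; exists (m - n)%N; rewrite -iterD subnK.
by apply/orP; left; apply/ancP; exists (n - m)%N; rewrite -iterD subnK.
Qed.

Lemma anc_parE v c : anc par v c -> v = c \/ anc par v (par c).
Proof.
move=> /ancP [[|n] <-]; first by left.
by right; apply/ancP; exists n; rewrite -iterSr.
Qed.

Hypothesis tree : is_rooted_tree r par.

Lemma anc_antisym x y : anc par x y -> anc par y x -> x = y.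
Proof.
move=> /ancP [n yx] /ancP [m xy].
have cycle_y : iter (m + n) par y = y by rewrite iterD yx xy.
case: (posnP (m + n)) => [/eqP | lt0mn].
  by rewrite addn_eq0 => /andP [_ /eqP n0]; rewrite -yx n0.
(* y lies on a cycle of par, and the only cycle is the loop at the root *)
have periodic j : iter (j * (m + n)) par y = y.
  by elim: j => [|j IHj] //; rewrite mulSn iterD IHj cycle_y.
have [k yr] : exists k, iter k par y = r by apply/ancP; exact: tree.2.
have y_root : y = r.
  rewrite -(periodic k) -(subnK (_ : k <= k * (m + n))%N) ?leq_pmulr //.
  by rewrite iterD yr iter_fix // tree.1.
by rewrite -yx y_root iter_fix // tree.1.
Qed.

End Ancestors.

Section Subtrees.
Variables (V : finType) (r : V) (par : V -> V).
Hypothesis tree : is_rooted_tree r par.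
Variables (a : V) (I1 I2 : {set V}).
Hypotheses (sI1 : I1 \subset idx par a) (sI2 : I2 \subset idx par a)
  (dI12 : [disjoint I1 & I2]).

Lemma idx_par i : i \in idx par a -> i != a -> par i = a.
Proof. by rewrite inE => /orP [/eqP -> /eqP // | /andP [/eqP ->]]. Qed.

Lemma anc_idx i : i \in idx par a -> anc par a i.
Proof.
move=> Ii; have [-> | ia] := eqVneq i a; first exact: anc_refl.
by rewrite -{1}(idx_par Ii ia); exact: anc_par.
Qed.

Lemma anc_Vsub i q : i \in idx par a -> q \in Vsub par a i -> anc par a q.
Proof.
rewrite /Vsub => Ii; case: eqP => _; rewrite inE; first by move=> /eqP ->; exact: anc_refl.
exact: anc_trans (anc_idx Ii).
Qed.

Lemma anc_VAI (I : {set V}) q : I \subset idx par a -> q \in VAI par a I -> anc par a q.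
Proof. by move=> sI /bigcupP [i Ii]; apply: anc_Vsub; exact: (subsetP sI). Qed.

Lemma root_Vsub i : i \in idx par a -> a \in Vsub par a i -> i = a.
Proof.
rewrite /Vsub => Ii; case: eqP => [-> // | _]; rewrite inE => ai.
exact: (anc_antisym tree ai (anc_idx Ii)).
Qed.

Lemma children_anc c1 c2 : c1 \in idx par a -> c1 != a -> c2 \in idx par a -> c2 != a ->
  anc par c1 c2 -> c1 = c2.
Proof.
move=> Ic1 c1a Ic2 c2a /anc_parE [// | ].
rewrite (idx_par Ic2 c2a) => c1_a.
by move: c1a; rewrite (anc_antisym tree c1_a (anc_idx Ic1)) eqxx.
Qed.

Lemma anc_child_desc c q v : c \in idx par a -> c != a ->
  anc par c q -> anc par v q -> anc par v a \/ anc par c v.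
Proof.
move=> Ic ca cq vq; case/orP: (anc_total vq cq) => [vc | ]; last by right.
case: (anc_parE vc) => [-> | ]; first by right; exact: anc_refl.
by rewrite (idx_par Ic ca); left.
Qed.

Lemma common_anc_VAI v q1 q2 : q1 \in VAI par a I1 -> q2 \in VAI par a I2 ->
  anc par v q1 -> anc par v q2 -> anc par v a.
Proof.
move=> /bigcupP [i1 Ii1 q1i1] /bigcupP [i2 Ii2 q2i2] vq1 vq2.
have i12 : i1 != i2.
  by apply: contraTneq Ii2 => <-; rewrite (disjointFr dI12 Ii1).
have Ji1 := subsetP sI1 _ Ii1; have Ji2 := subsetP sI2 _ Ii2.
move: q1i1 q2i2; rewrite /Vsub.
case: eqP => [_ | /eqP i1a]; rewrite inE; first by move=> /eqP <-.
case: eqP => [_ | /eqP i2a]; rewrite inE => i1q1; first by move=> /eqP <-.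
move=> i2q2.
case: (anc_child_desc Ji1 i1a i1q1 vq1) => // i1v.
case: (anc_child_desc Ji2 i2a i2q2 vq2) => // i2v.
case/orP: (anc_total i1v i2v) => [/(children_anc Ji1 i1a Ji2 i2a) |
  /(children_anc Ji2 i2a Ji1 i1a) i21]; first by move/eqP: i12.
by move: i12; rewrite i21 eqxx.
Qed.

Lemma disjoint_VAI (Q1 Q2 : {set V}) :
  Q1 \subset VAI par a I1 -> Q2 \subset VAI par a I2 -> [disjoint Q1 & Q2].
Proof.
move=> sQ1 sQ2; apply/pred0P => q /=.
apply/negbTE/andP => [[/(subsetP sQ1) q1 /(subsetP sQ2) q2]].
have qa : q = a.
  have qq := common_anc_VAI q1 q2 (anc_refl _ _) (anc_refl _ _).
  exact: (anc_antisym tree qq (anc_VAI sI1 q1)).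
move: q1 q2; rewrite qa => /bigcupP [i1 Ii1 ai1] /bigcupP [i2 Ii2 ai2].
have i1a := root_Vsub (subsetP sI1 _ Ii1) ai1.
have i2a := root_Vsub (subsetP sI2 _ Ii2) ai2.
by move: Ii2; rewrite i2a -i1a (disjointFr dI12 Ii1).
Qed.

Lemma anc_VAI_both v (Q1 Q2 : {set V}) :
  Q1 \subset VAI par a I1 -> Q2 \subset VAI par a I2 ->
  [exists q in Q1, anc par v q] && [exists q in Q2, anc par v q]
  = [&& Q1 != set0, Q2 != set0 & anc par v a].
Proof.
move=> sQ1 sQ2; apply/andP/and3P.
  case=> /exists_inP [q1 Qq1 vq1] /exists_inP [q2 Qq2 vq2]; split.
  - by apply/set0Pn; exists q1.
  - by apply/set0Pn; exists q2.
  - exact: common_anc_VAI (subsetP sQ1 _ Qq1) (subsetP sQ2 _ Qq2) vq1 vq2.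
case=> /set0Pn [q1 Qq1] /set0Pn [q2 Qq2] va; split; apply/exists_inP.
  by exists q1 => //; apply: anc_trans va (anc_VAI sI1 (subsetP sQ1 _ Qq1)).
by exists q2 => //; apply: anc_trans va (anc_VAI sI2 (subsetP sQ2 _ Qq2)).
Qed.

Variables (R : realFieldType) (w : V -> R).

Lemma Wt_setU_VAI (Q1 Q2 : {set V}) :
  Q1 \subset VAI par a I1 -> Q2 \subset VAI par a I2 ->
  Wt r par w (Q1 :|: Q2) = Wt r par w Q1 + Wt r par w Q2
    - ((Q1 != set0) && (Q2 != set0))%:R * dist r par w a.
Proof.
move=> sQ1 sQ2; rewrite /Wt /dist big_distrr /= !(big_mkcond (fun v => _ && _)) /=.
rewrite -big_split -sumrB /=; apply: eq_bigr => v _.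
have both := anc_VAI_both v sQ1 sQ2.
have -> : [exists q in Q1 :|: Q2, anc par v q]
    = [exists q in Q1, anc par v q] || [exists q in Q2, anc par v q].
  apply/exists_inP/orP => [[q] | [] /exists_inP [q Qq vq]]; last 2 first.
  - by exists q; rewrite // inE Qq.
  - by exists q; rewrite // inE Qq orbT.
  by rewrite inE => /orP [] Qq vq; [left | right]; apply/exists_inP; exists q.
move: both; case: [exists q in Q1, _]; case: [exists q in Q2, _];
  case: (_ != set0); case: (_ != set0); case: (anc par v a); case: (v != r) => //= _; ring.
Qed.

End Subtrees.

Section Independence.
Variables (R : realFieldType) (V : finType) (pi : V -> R).

Lemma prob_omegaE (om : {set V}) :
  prob_omega pi om = \prod_v (if v \in om then pi v else 1 - pi v).
Proof.
rewrite /prob_omega big_mkcond [X in _ * X]big_mkcond -big_split /=.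
by apply: eq_bigr => v _; rewrite inE; case: (v \in om); rewrite ?mulr1 ?mul1r.
Qed.

Lemma prob_miss (S : {set V}) :
  \sum_(om : {set V}) prob_omega pi om * (S :&: om == set0)%:R = \prod_(s in S) (1 - pi s).
Proof.
(* distribute the product over all subsets: the factor of v in S and in om is 0 *)
transitivity (\sum_(om in {set V})
    \prod_v (if v \in om then (if v \in S then 0 else pi v) else 1 - pi v)).
  apply: eq_bigr => om _; rewrite prob_omegaE; have [Som0 | /set0Pn [v]] := eqVneq.
    rewrite mulr1; apply: eq_bigr => v _; case: ifP => // om_v; case: ifP => // S_v.
    by move/setP/(_ v): Som0; rewrite !inE S_v om_v.
  rewrite inE => /andP [S_v om_v].
  by rewrite mulr0 (bigD1 v) //= om_v S_v mul0r.
rewrite -bigA_distr [RHS]big_mkcond /=; apply: eq_bigr => v _.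
by case: (v \in S); rewrite ?add0r // addrC subrK.
Qed.

Lemma prob_hit_both (S1 S2 : {set V}) : [disjoint S1 & S2] ->
  \sum_(om : {set V}) prob_omega pi om * ((S1 :&: om != set0) && (S2 :&: om != set0))%:R
  = Pr pi S1 * Pr pi S2.
Proof.
move=> dS12.
(* inclusion-exclusion for the complementary events "S misses om" *)
transitivity (\sum_(om : {set V}) prob_omega pi om * (set0 :&: om == set0)%:R
  - \sum_(om : {set V}) prob_omega pi om * (S1 :&: om == set0)%:R
  - \sum_(om : {set V}) prob_omega pi om * (S2 :&: om == set0)%:R
  + \sum_(om : {set V}) prob_omega pi om * ((S1 :|: S2) :&: om == set0)%:R).
  rewrite -!sumrB -big_split /=; apply: eq_bigr => om _.
  rewrite set0I eqxx setIUl setU_eq0.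
  by case: (S1 :&: om == set0); case: (S2 :&: om == set0); rewrite /= ?mulr1 ?mulr0; ring.
by rewrite !prob_miss big_set0 prodr_setU // /Pr; ring.
Qed.

End Independence.

Lemma EW_setU_VAI (R : realFieldType) (V : finType) (r : V) (par : V -> V) (w pi : V -> R)
    (a : V) (I1 I2 Psi Phi : {set V}) :
  is_rooted_tree r par -> I1 \subset idx par a -> I2 \subset idx par a ->
  [disjoint I1 & I2] -> Psi \subset VAI par a I1 -> Phi \subset VAI par a I2 ->
  EW r par w pi (Psi :|: Phi) =
    EW r par w pi Psi + EW r par w pi Phi - dist r par w a * Pr pi Psi * Pr pi Phi.
Proof.
move=> tree sI1 sI2 dI12 sPsi sPhi.
rewrite -mulrA -prob_hit_both ?(disjoint_VAI tree sI1 sI2 dI12 sPsi sPhi) //.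
rewrite /EW big_distrr -big_split -sumrB /=; apply: eq_bigr => om _.
rewrite setIUl (Wt_setU_VAI tree sI1 sI2 dI12) //; last 2 first.
- exact: subset_trans (subsetIl _ _) sPsi.
- exact: subset_trans (subsetIl _ _) sPhi.
ring.
Qed.

Theorem proposition6 (R : realFieldType) (V : finType) (r : V) (par : V -> V)
    (w pi p : V -> R)
    (Htree : is_rooted_tree r par)
    (Hw : forall v, 0 <= w v)
    (Hpi : forall v, 0 < pi v <= 1)
    (a : V) (I1 I2 : {set V})
    (HI1 : I1 \subset idx par a) (HI2 : I2 \subset idx par a)
    (Hdisj : [disjoint I1 & I2])
    (Psi Phi : {set V})
    (HPsi : Psi \subset VAI par a I1) (HPhi : Phi \subset VAI par a I2)
    (x : R) (Hx0 : 0 <= x) (Hx1 : x <= dist r par w a) :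
  G r par w pi p (Psi :|: Phi) x =
    G r par w pi p Psi x
    + G r par w pi p Phi (x + (dist r par w a - x) * Pr pi Psi).
Proof.
have dPsiPhi := disjoint_VAI Htree HI1 HI2 Hdisj HPsi HPhi.
rewrite /G (EW_setU_VAI w pi Htree HI1 HI2 Hdisj HPsi HPhi) sumr_setU //.
by rewrite /Pr prodr_setU //; ring.
Qed.
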